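(* Let $\omega=\frac{-1+\sqrt{-3}}{2}$. (1) $\{\operatorname{Tr} M : M\in G_q(\omega)\}=\{0,\ \pm\omega^j,\ \pm 2\omega^j : j=0,1,2\}$. (2) For $M_q\in G_q$, let $f(q)=\operatorname{Tr} M_q\in\mathbb{Z}[q,q^{-1}]$. Then the following are equivalent: $f(1)$ is a multiple of $3$; $f(\omega)=0$; $f(q)$ is divisible by $[3]_q=q^2+q+1$.
   Context: Let $q$ be a formal parameter and let $R_q=\begin{pmatrix} q & 1\\ 0 & 1\end{pmatrix}$, $S_q=\begin{pmatrix} 0 & -q^{-1}\\ 1 & 0\end{pmatrix}\in \mathrm{GL}(2,\mathbb{Z}[q,q^{-1}])$. Let $G_q=\langle R_q,S_q\rangle$ be the group they generate. For $\zeta\in\mathbb{C}^*$, set $G_q(\zeta)=\{M_q|_{q=\zeta} : M_q\in G_q\}\subset \mathrm{GL}(2,\mathbb{C})$. *)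

From HB Require Import structures.
From mathcomp Require Import all_boot all_order all_algebra all_field.
Set Implicit Arguments. Unset Strict Implicit. Unset Printing Implicit Defensive.
Import Order.TTheory GRing.Theory Num.Theory.
Local Open Scope ring_scope.

Definition mx2 (R : Type) (a b c d : R) : 'M[R]_2 :=
  \matrix_(i < 2, j < 2)
    if i == 0 :> nat then (if j == 0 :> nat then a else b)
    else (if j == 0 :> nat then c else d).

Inductive gen := gR | gS | gRi | gSi.

Definition gen_at (z : algC) (g : gen) : 'M[algC]_2 :=
  match g with
  | gR  => mx2 z 1 0 1
  | gS  => mx2 0 (- z^-1) 1 0
  | gRi => mx2 z^-1 (- z^-1) 0 1
  | gSi => mx2 0 1 (- z) 0
  end.

Definition word_at (z : algC) (w : seq gen) : 'M[algC]_2 :=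
  \prod_(g <- w) gen_at z g.

(* Elements of Z[q,q^{-1}] are represented as pairs (k, p) standing for q^{-k} p(q),
   with p : {poly int}.  Matrices over Z[q,q^{-1}] likewise as (k, P) = q^{-k} P. *)
Definition laurent := (nat * {poly int})%type.

Definition gen_q (g : gen) : nat * 'M[{poly int}]_2 :=
  match g with
  | gR  => (0%N, mx2 'X 1 0 1)
  | gS  => (1%N, mx2 0 (-1) 'X 0)         (* S_q = q^-1 [[0,-1],[q,0]] *)
  | gRi => (1%N, mx2 1 (-1) 0 'X)         (* R_q^-1 = q^-1 [[1,-1],[0,q]] *)
  | gSi => (0%N, mx2 0 1 (- 'X) 0)
  end.

Definition word_q (w : seq gen) : nat * 'M[{poly int}]_2 :=
  foldr (fun g (acc : nat * 'M[{poly int}]_2) =>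
           (((gen_q g).1 + acc.1)%N, (gen_q g).2 *m acc.2)) (0%N, 1%:M) w.

Definition trace_q (w : seq gen) : laurent := ((word_q w).1, \tr (word_q w).2).

Definition laurent_at (z : algC) (f : laurent) : algC :=
  (map_poly (fun x : int => x%:~R) f.2).[z] / z ^+ f.1.

Definition laurent_at1 (f : laurent) : int := f.2.[1].

(* divisibility in Z[q,q^{-1}] : f = d * g for some Laurent g = q^{-m} h, i.e.
   q^{-k} p = d q^{-m} h, i.e. q^m p = q^k d h. *)
Definition laurent_dvd (d : {poly int}) (f : laurent) : Prop :=
  exists (m : nat) (h : {poly int}), 'X^m * f.2 = 'X^(f.1) * d * h.

Definition omega : algC := (-1 + sqrtC (-3)) / 2.

(* At q = omega the generators have entries in Z[omega], and G_q(omega) is a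
   finite group of order 72.  Enumerating it, with a + b omega encoded as the
   integer pair (a, b), gives a set of matrices closed under left multiplication
   by the generators whose traces are exactly the numbers c omega^j with
   c in {0, 1, -1, 2, -2}.  For (2), write f = q^-k p with p in Z[q].  As 1 and
   omega are linearly independent over Z, omega is a root of p iff [3]_q divides
   p.  If f(omega) = c omega^j, then [3]_q divides p - c q^(j+k), so
   f(1) = p(1) = c (mod 3); hence 3 | f(1) iff c = 0 iff f(omega) = 0. *)

From mathcomp Require Import all_boot all_order all_algebra all_field.
From mathcomp Require Import ring zify.
Import GRing.Theory Num.Theory.
Local Open Scope ring_scope.

Lemma omega_sqr : omega ^+ 2 = -1 - omega.
Proof.
have sqrt_sqr : sqrtC (-3) ^+ 2 = -3 :> algC by rewrite sqrtCK.
apply/eqP; rewrite -subr_eq0.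
have -> : omega ^+ 2 - (-1 - omega) = (sqrtC (-3) ^+ 2 + 3) / 4 by rewrite /omega; field.
by rewrite sqrt_sqr addNr mul0r.
Qed.

Lemma omega_root : omega ^+ 2 + omega + 1 = 0.
Proof. by rewrite omega_sqr; ring. Qed.

Lemma omega_neq0 : omega != 0.
Proof.
apply/eqP => omega0; move: omega_sqr; rewrite omega0 expr0n subr0 => /eqP.
by rewrite eq_sym oppr_eq0 oner_eq0.
Qed.

Lemma omegaV : omega^-1 = -1 - omega.
Proof.
apply: (mulfI omega_neq0); rewrite mulfV ?omega_neq0 // mulrBr mulrN1 -expr2 omega_sqr.
by ring.
Qed.

Lemma intr_omega_eq0 (a b : int) : a%:~R + b%:~R * omega = 0 -> a = 0 /\ b = 0.
Proof.
move=> ab0.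
have norm_eq : ((a ^+ 2 - a * b + b ^+ 2 : int)%:~R : algC) =
    (a%:~R + b%:~R * omega) * (a%:~R - b%:~R - b%:~R * omega)
    + (b ^+ 2)%:~R * (omega ^+ 2 + omega + 1) by ring.
move: norm_eq; rewrite ab0 omega_root mul0r mulr0 addr0 => /eqP.
rewrite intr_eq0 !expr2 => /eqP norm0.
by split; nia.
Qed.

Lemma mx2E (R : Type) (a b c d : R) i j : mx2 a b c d i j =
  if i == 0 :> nat then (if j == 0 :> nat then a else b)
  else (if j == 0 :> nat then c else d).
Proof. by rewrite mxE. Qed.

Lemma sum_ord2 (V : nmodType) (F : 'I_2 -> V) : \sum_(i < 2) F i = F 0 + F 1.
Proof. by rewrite big_ord_recl big_ord1; congr (_ + F _); apply: val_inj. Qed.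

Lemma mul_mx2 (R : pzSemiRingType) (a b c d e f g h : R) :
  mx2 a b c d *m mx2 e f g h =
  mx2 (a * e + b * g) (a * f + b * h) (c * e + d * g) (c * f + d * h).
Proof.
apply/matrixP => i j; rewrite mxE sum_ord2 !mx2E.
by case: i => [[|[|i]] ?] //; case: j => [[|[|j]] ?] //.
Qed.

Lemma mx2_1 (R : pzSemiRingType) : mx2 (1 : R) 0 0 1 = 1.
Proof.
apply/matrixP => i j; rewrite !mxE.
by case: i => [[|[|i]] ?] //; case: j => [[|[|j]] ?] //.
Qed.

Lemma mxtrace_mx2 (R : pzSemiRingType) (a b c d : R) : \tr (mx2 a b c d) = a + d.
Proof. by rewrite /mxtrace sum_ord2 !mx2E. Qed.

(* The pair (a, b) stands for a + b omega; eis_mul reduces with omega^2 = -1 - omega. *)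
Definition eis := (int * int)%type.

Definition eis_val (x : eis) : algC := x.1%:~R + x.2%:~R * omega.

Definition eis_add (x y : eis) : eis := (x.1 + y.1, x.2 + y.2).

Definition eis_mul (x y : eis) : eis :=
  (x.1 * y.1 - x.2 * y.2, x.1 * y.2 + x.2 * y.1 - x.2 * y.2).

Lemma eis_valD x y : eis_val (eis_add x y) = eis_val x + eis_val y.
Proof. by rewrite /eis_val /= !rmorphD; ring. Qed.

Lemma eis_valM x y : eis_val (eis_mul x y) = eis_val x * eis_val y.
Proof.
rewrite /eis_val /= !(rmorphB, rmorphD, rmorphM).
apply/eqP; rewrite -subr_eq0; apply/eqP.
transitivity (- (x.2%:~R * y.2%:~R) * (omega ^+ 2 + omega + 1) : algC); first ring.
by rewrite omega_root mulr0.
Qed.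

Definition eis_mx := (eis * eis * eis * eis)%type.

Definition eis_mxval (A : eis_mx) : 'M[algC]_2 :=
  let: (a, b, c, d) := A in mx2 (eis_val a) (eis_val b) (eis_val c) (eis_val d).

Definition eis_mxmul (A B : eis_mx) : eis_mx :=
  let: (a, b, c, d) := A in let: (e, f, g, h) := B in
  (eis_add (eis_mul a e) (eis_mul b g), eis_add (eis_mul a f) (eis_mul b h),
   eis_add (eis_mul c e) (eis_mul d g), eis_add (eis_mul c f) (eis_mul d h)).

Definition eis_mxtrace (A : eis_mx) : eis := let: (a, _, _, d) := A in eis_add a d.

Lemma eis_mxvalM A B : eis_mxval (eis_mxmul A B) = eis_mxval A *m eis_mxval B.
Proof.
case: A => [[[a b] c] d]; case: B => [[[e f] g] h].
by rewrite /= mul_mx2 !eis_valD !eis_valM.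
Qed.

Lemma mxtrace_eis_mxval A : \tr (eis_mxval A) = eis_val (eis_mxtrace A).
Proof. by case: A => [[[a b] c] d]; rewrite /= mxtrace_mx2 eis_valD. Qed.

Definition eis_gen (g : gen) : eis_mx :=
  match g with
  | gR  => ((0, 1), (1, 0), (0, 0), (1, 0))
  | gS  => ((0, 0), (1, 1), (1, 0), (0, 0))
  | gRi => ((-1, -1), (1, 1), (0, 0), (1, 0))
  | gSi => ((0, 0), (1, 0), (0, -1), (0, 0))
  end.

Definition eis_word (w : seq gen) : eis_mx :=
  foldr (fun g => eis_mxmul (eis_gen g)) ((1, 0), (0, 0), (0, 0), (1, 0)) w.

Lemma gen_at_omega g : gen_at omega g = eis_mxval (eis_gen g).
Proof. by case: g => /=; rewrite ?omegaV; congr mx2; rewrite /eis_val /=; ring. Qed.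

Lemma word_at_omega w : word_at omega w = eis_mxval (eis_word w).
Proof.
elim: w => [|g w IHw].
  rewrite /word_at big_nil -mx2_1; congr mx2; rewrite /eis_val /=; ring.
by rewrite /word_at big_cons -/(word_at _ _) IHw eis_mxvalM gen_at_omega mulmxE.
Qed.

Definition gens := [:: gR; gS; gRi; gSi].

Definition extend_words (ws : seq (seq gen)) : seq (seq gen) :=
  foldl (fun vs v => if eis_word v \in map eis_word vs then vs else rcons vs v)
    ws [seq g :: w | w <- ws, g <- gens].

(* Six rounds of breadth-first search already reach all 72 elements. *)
Definition group_words := iter 6 extend_words [:: [::]].

Definition group_mxs := map eis_word group_words.

Lemma group_mxs_closed_cert :
  all (fun A => all (fun g => eis_mxmul (eis_gen g) A \in group_mxs) gens) group_mxs.
Proof. by vm_compute. Qed.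

Lemma group_mxs_closed g A : A \in group_mxs -> eis_mxmul (eis_gen g) A \in group_mxs.
Proof. by move=> /(allP group_mxs_closed_cert); case: g => /and5P[]. Qed.

Lemma eis_word_group w : eis_word w \in group_mxs.
Proof. by elim: w => [|g w]; [vm_compute | exact: group_mxs_closed]. Qed.

Definition trace_coefs : seq int := [:: 0; 1; -1; 2; -2].

Definition trace_form (z : algC) :=
  exists2 c, c \in trace_coefs & exists j : 'I_3, z = c%:~R * omega ^+ j.

Definition eis_omega_exp (j : nat) : eis := iter j (eis_mul (0, 1)) (1, 0).

Definition eis_trace_forms : seq eis :=
  [seq eis_mul (c, 0) (eis_omega_exp j) | c <- trace_coefs, j <- iota 0 3].

Lemma eis_val_omega_exp j : eis_val (eis_omega_exp j) = omega ^+ j.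
Proof.
elim: j => [|j IHj]; first by rewrite /eis_val /= mul0r addr0.
rewrite /eis_omega_exp iterS -/(eis_omega_exp j) eis_valM IHj exprS.
by rewrite /eis_val /= mul1r add0r.
Qed.

Lemma trace_form_eis z :
  trace_form z <-> exists2 x, x \in eis_trace_forms & z = eis_val x.
Proof.
have val_form c j : eis_val (eis_mul (c, 0) (eis_omega_exp j)) = c%:~R * omega ^+ j.
  by rewrite eis_valM eis_val_omega_exp /eis_val /= mul0r addr0.
split=> [[c c_coef [j ->]] | [_ /allpairsP[[c j] [c_coef j_lt3 ->]] ->]].
  exists (eis_mul (c, 0) (eis_omega_exp j)); last by rewrite val_form.
  by apply/allpairsP; exists (c, nat_of_ord j); rewrite mem_iota ltn_ord.
rewrite mem_iota in j_lt3.
by exists c => //; exists (Ordinal j_lt3); rewrite val_form.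
Qed.

Lemma group_traces_cert : all (fun A => eis_mxtrace A \in eis_trace_forms) group_mxs.
Proof. by vm_compute. Qed.

Lemma trace_forms_attained_cert :
  all (fun x => has (fun w => eis_mxtrace (eis_word w) == x) group_words) eis_trace_forms.
Proof. by vm_compute. Qed.

Lemma traces_at_omega z : (exists w, \tr (word_at omega w) = z) <-> trace_form z.
Proof.
rewrite trace_form_eis; split=> [[w <-] | [x x_form ->]].
  rewrite word_at_omega mxtrace_eis_mxval; exists (eis_mxtrace (eis_word w)) => //.
  exact: (allP group_traces_cert _ (eis_word_group w)).
have /(nth_find [::])/eqP := allP trace_forms_attained_cert x x_form.
set w := nth _ _ _ => trace_w.
by exists w; rewrite word_at_omega mxtrace_eis_mxval trace_w.
Qed.

Lemma trace_formE z : trace_form z <->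
  (z = 0 \/ exists j : 'I_3,
     z = omega ^+ j \/ z = - omega ^+ j \/ z = 2 * omega ^+ j \/ z = - (2 * omega ^+ j)).
Proof.
split=> [[c + [j ->]] | [-> | [j forms_j]]].
- rewrite !inE => /or4P[| | | /orP[]] /eqP->; [by left; rewrite mul0r | right; exists j ..].
  + by left; rewrite mul1r.
  + by right; left; rewrite mulN1r.
  + by right; right; left.
  + by right; right; right; rewrite mulNr.
- by exists 0 => //; exists ord0; rewrite mul0r.
- case: forms_j => [|[|[|]]] ->.
  + by exists 1 => //; exists j; rewrite mul1r.
  + by exists (-1) => //; exists j; rewrite mulN1r.
  + by exists 2 => //; exists j.
  + by exists (-2) => //; exists j; rewrite mulNr.
Qed.

Definition ev (z : algC) : {rmorphism {poly int} -> algC} :=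
  horner_morph (fun a : int => mulrC z a%:~R).

Lemma evX z : ev z 'X = z.
Proof. exact: horner_morphX. Qed.

Lemma evC z c : ev z c%:P = c%:~R.
Proof. exact: horner_morphC. Qed.

Lemma laurent_atE z f : laurent_at z f = ev z f.2 / z ^+ f.1.
Proof. by []. Qed.

Lemma map_mx_gen_q z g :
  z != 0 -> map_mx (ev z) (gen_q g).2 = z ^+ (gen_q g).1 *: gen_at z g.
Proof.
move=> z0; apply/matrixP => i j; rewrite !mxE.
case: g; rewrite /= !mx2E; case: i => [[|[|i]] ?] //; case: j => [[|[|j]] ?] //=;
  by rewrite ?(rmorph0, rmorph1, rmorphN, evX, expr0, expr1, mul1r, mulr0, mulr1,
               mulrN, mulfV z0).
Qed.

Lemma map_mx_word_q z w :
  z != 0 -> map_mx (ev z) (word_q w).2 = z ^+ (word_q w).1 *: word_at z w.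
Proof.
move=> z0; elim: w => [|g w IHw]; first by rewrite /= map_mx1 scale1r /word_at big_nil.
rewrite /word_at big_cons -/(word_at z w) /= map_mxM IHw map_mx_gen_q //.
by rewrite -scalemxAl -scalemxAr scalerA -exprD mulmxE.
Qed.

Lemma laurent_at_trace_q z w : z != 0 -> laurent_at z (trace_q w) = \tr (word_at z w).
Proof.
move=> z0; rewrite laurent_atE /= -trace_map_mx map_mx_word_q // mxtraceZ.
by rewrite [_ * \tr _]mulrC mulfK // expf_neq0.
Qed.

Definition phi3 : {poly int} := 'X^2 + 'X + 1.

Lemma phi3_monic : phi3 \is monic.
Proof.
by rewrite /phi3 -addrA monicE lead_coefDl ?lead_coefXn // size_polyXn -polyC1 size_XaddC.
Qed.

Lemma size_phi3 : size phi3 = 3%N.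
Proof. by rewrite /phi3 -addrA size_polyDl ?size_polyXn // -polyC1 size_XaddC. Qed.

Lemma ev_omega_phi3 : ev omega phi3 = 0.
Proof. by rewrite /phi3 !rmorphD rmorph1 rmorphXn evX omega_root. Qed.

Lemma ev_omega_eq0 p : ev omega p = 0 <-> exists s, p = s * phi3.
Proof.
split=> [p0 | [s ->]]; last by rewrite rmorphM ev_omega_phi3 mulr0.
have p_div := Pdiv.RingMonic.rdivp_eq phi3_monic p.
set s := Pdiv.CommonRing.rdivp p phi3 in p_div.
set r := Pdiv.CommonRing.rmodp p phi3 in p_div.
have r_lt3 : (size r < 3)%N.
  by rewrite -size_phi3 Pdiv.CommonRing.ltn_rmodpN0 // -size_poly_eq0 size_phi3.
have r_lin : ev omega r = (r`_0)%:~R + (r`_1)%:~R * omega.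
  have r_le2 : (size (map_poly (fun a : int => a%:~R : algC) r) <= 2)%N.
    by rewrite size_map_inj_poly //; exact: intr_inj.
  by rewrite [LHS](horner_coef_wide _ r_le2) sum_ord2 !coef_map expr0 mulr1 expr1.
have [r0_0 r1_0] : r`_0 = 0 /\ r`_1 = 0.
  apply: intr_omega_eq0; rewrite -r_lin.
  by move: p0; rewrite p_div rmorphD rmorphM ev_omega_phi3 mulr0 add0r.
exists s; rewrite {1}p_div; suff -> : r = 0 by rewrite addr0.
apply/polyP => -[|[|i]]; rewrite coef0 //.
by rewrite nth_default // -ltnS; apply: leq_trans r_lt3 _.
Qed.

Lemma ev_omega_modz3 p (c : int) n :
  ev omega p = c%:~R * omega ^+ n -> (p.[1] = c %[mod 3])%Z.
Proof.
move=> pc; have [s ps] : exists s, p - c%:P * 'X^n = s * phi3.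
  by apply/ev_omega_eq0; rewrite rmorphB rmorphM evC rmorphXn evX pc subrr.
have -> : p.[1] = s.[1] * 3 + c.
  move: (congr1 (horner^~ 1) ps); rewrite /phi3 !hornerE !expr1n mulr1 => /eqP.
  by rewrite subr_eq => /eqP->.
exact: modzMDl.
Qed.

Lemma laurent_at_omega_eq0 f : laurent_at omega f = 0 <-> laurent_dvd phi3 f.
Proof.
case: f => k p; rewrite laurent_atE /laurent_dvd /=.
have omega_exp_neq0 m : omega ^+ m != 0 by rewrite expf_neq0 // omega_neq0.
split=> [/eqP | [m [h eq_mh]]].
  rewrite mulf_eq0 invr_eq0 (negbTE (omega_exp_neq0 k)) orbF => /eqP /ev_omega_eq0 [s ->].
  by exists k, s; rewrite [s * _]mulrC mulrA.
have /eqP := congr1 (ev omega) eq_mh.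
rewrite !rmorphM rmorphXn evX ev_omega_phi3 mulr0 mul0r mulf_eq0.
by rewrite (negbTE (omega_exp_neq0 m)) /= => /eqP->; rewrite mul0r.
Qed.

Lemma laurent_at_omega_form f :
  trace_form (laurent_at omega f) -> (3 %| laurent_at1 f)%Z <-> laurent_at omega f = 0.
Proof.
case: f => k p [c c_coef [j fc]]; rewrite /laurent_at1 laurent_atE /= in fc *.
have /ev_omega_modz3 p1_c : ev omega p = c%:~R * omega ^+ (j + k).
  by rewrite exprD mulrA -fc divfK // expf_neq0 // omega_neq0.
have -> : (3 %| p.[1])%Z = (c == 0).
  have -> : (3 %| p.[1])%Z = (3 %| c)%Z by apply/dvdz_mod0P/dvdz_mod0P; rewrite p1_c.
  by move: c_coef; rewrite !inE => /or4P[| | | /orP[]] /eqP->.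
rewrite fc; split=> [/eqP-> | /eqP]; first by rewrite mul0r.
by rewrite mulf_eq0 intr_eq0 expf_eq0 (negbTE omega_neq0) andbF orbF.
Qed.

Theorem corollary3p2 :
  (forall z : algC,
     (exists w : seq gen, \tr (word_at omega w) = z) <->
     (z = 0 \/ exists j : 'I_3,
        z = omega ^+ j \/ z = - omega ^+ j \/
        z = 2 * omega ^+ j \/ z = - (2 * omega ^+ j)))
  /\
  (forall w : seq gen,
     ((3 %| laurent_at1 (trace_q w))%Z <-> laurent_at omega (trace_q w) = 0) /\
     (laurent_at omega (trace_q w) = 0 <-> laurent_dvd ('X^2 + 'X + 1) (trace_q w))).
Proof.
split=> [z | w]; first exact: iff_trans (traces_at_omega z) (trace_formE z).
split; last exact: laurent_at_omega_eq0.
apply: laurent_at_omega_form.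
by rewrite laurent_at_trace_q ?omega_neq0 //; apply/traces_at_omega; exists w.
Qed.
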